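(* Let $\tau$ be a real representation of $\mathrm{SO}(D)$ on $\mathbb{R}^N$ and let $\mathcal{D}\in\mathrm{Cov}(\tau,\mathbb{R}^N)$ be strongly regular, i.e. $\mathcal{D}:\mathcal{S}(\mathbb{R}^D)\otimes\mathbb{R}^N\to\mathcal{S}(\mathbb{R}^D)\otimes\mathbb{R}^N$ is a continuous bijection. Let $\mathcal{R}:\mathcal{S}(\mathbb{R}^D)\otimes\mathbb{R}^N\to\mathcal{S}(\mathbb{R}^D)\otimes\mathbb{R}^N$ be a continuous linear map with $\mathcal{R}^2=\mathrm{id}$ mapping $\mathcal{S}(\mathbb{R}^D_{+})\otimes\mathbb{R}^N$ into $\mathcal{S}(\mathbb{R}^D_{-})\otimes\mathbb{R}^N$ and $\mathcal{S}(\mathbb{R}^D_{-})\otimes\mathbb{R}^N$ into $\mathcal{S}(\mathbb{R}^D_{+})\otimes\mathbb{R}^N$. Let $\eta$ be an $\mathcal{R}$-reflection positive generalized random field indexed by $\mathcal{S}(\mathbb{R}^D)\otimes\mathbb{R}^N$, and let $\varphi$ be the weak solution of $\tilde{\mathcal{D}}\varphi=\eta$, with characteristic functional $\Gamma_\varphi(f)=\Gamma_\eta(\mathcal{D}^{-1}f)$. Define $$\mathcal{F}_+=\{f=\mathcal{D}g:\ g\in\mathcal{S}(\mathbb{R}^D_+)\otimes\mathbb{R}^N,\ [\mathcal{R},\mathcal{D}]g=0\}.$$ Then for all finite sequences $c_k\in\mathbb{C}$ and $f_k\in\mathcal{F}_+$, $$\sum_{k,l}c_k\overline{c_l}\,\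Gamma_\varphi(f_k-\mathcal{R}f_l)\ge0.$$
   Context: $\mathcal{S}(\mathbb{R}^D_{\pm})=\{f\in\mathcal{S}(\mathbb{R}^D):\operatorname{supp}f\subset\{x_0\ge0\}\ (\text{resp. }\{x_0\le0\})\}$. $\mathrm{Cov}(\tau,\mathbb{R}^N)$ is the set of operators $\sum_jB_j\partial/\partial x_j+mE$ commuting with all $(T_gf)(x)=\tau(g)f(g^{-1}x)$, $g\in\mathrm{SO}(D)$; $\tilde{\mathcal{D}}$ is the transpose of $\mathcal{D}$. $\Gamma_\xi(f)=E(e^{i\langle\xi,f\rangle})$ is the characteristic functional. The field $\eta$ is $\mathcal{R}$-reflection positive if $\sum_{k,l}c_k\overline{c_l}\Gamma_\eta(f_k-\mathcal{R}f_l)\ge0$ for all finite sequences $c_k\in\mathbb{C}$, $f_k\in\mathcal{S}(\mathbb{R}^D_+)\otimes\mathbb{R}^N$. *)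

From HB Require Import structures.
From mathcomp Require Import all_boot all_order all_algebra.
From mathcomp Require Import all_classical all_reals all_analysis.
From mathcomp Require Import complex.
Set Implicit Arguments. Unset Strict Implicit. Unset Printing Implicit Defensive.
Import Order.TTheory GRing.Theory Num.Theory.
Import numFieldNormedType.Exports.
Local Open Scope classical_set_scope.
Local Open Scope ring_scope.

Section Defs.
Variable R : realType.
Variable d N : nat.
Notation D := d.+1.
Notation pt := 'rV[R]_D.
(* An element of "S(R^D) (x) R^N" is represented as a function R^D -> R^N. *)
Definition fieldfun := pt -> 'rV[R]_N.

Definition ebase (j : 'I_D) : pt := delta_mx 0 j.

Definition dpart (s : seq 'I_D) (f : fieldfun) : fieldfun :=
  foldr (fun j g => fun x => 'D_(ebase j) g x) f s.

Definition smooth (f : fieldfun) : Prop :=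
  forall (s : seq 'I_D) (j : 'I_D) (x : pt), derivable (dpart s f) x (ebase j).

Definition rapid_decrease (f : fieldfun) : Prop :=
  forall (s : seq 'I_D) (k : nat), exists C : R,
    forall x : pt, (1 + `|x|) ^+ k * `|dpart s f x| <= C.

Definition schwartz (f : fieldfun) : Prop := smooth f /\ rapid_decrease f.

Definition seminorm (k : nat) (s : seq 'I_D) (f : fieldfun) : R :=
  sup (range (fun x : pt => (1 + `|x|) ^+ k * `|dpart s f x|)).

Definition fadd (f g : fieldfun) : fieldfun := fun x => f x + g x.
Definition fsub (f g : fieldfun) : fieldfun := fun x => f x - g x.
Definition fscale (a : R) (f : fieldfun) : fieldfun := fun x => a *: f x.
Definition fzero : fieldfun := fun _ => 0.

Definition support (f : fieldfun) : set pt := closure [set x | f x != 0].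
Definition schwartz_plus (f : fieldfun) : Prop :=
  schwartz f /\ support f `<=` [set x | 0 <= x ord0 ord0].
Definition schwartz_minus (f : fieldfun) : Prop :=
  schwartz f /\ support f `<=` [set x | x ord0 ord0 <= 0].

Definition maps_S (L : fieldfun -> fieldfun) : Prop :=
  forall f, schwartz f -> schwartz (L f).
Definition linear_on_S (L : fieldfun -> fieldfun) : Prop :=
  forall (a b : R) f g, schwartz f -> schwartz g ->
    L (fadd (fscale a f) (fscale b g)) = fadd (fscale a (L f)) (fscale b (L g)).
Definition continuous_on_S (L : fieldfun -> fieldfun) : Prop :=
  forall (k : nat) (s : seq 'I_D), exists (l : seq (nat * seq 'I_D)) (C : R),
    forall f, schwartz f ->
      seminorm k s (L f) <= C * \sum_(p <- l) seminorm p.1 p.2 f.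
Definition bijective_on_S (L : fieldfun -> fieldfun) : Prop :=
  (forall f g, schwartz f -> schwartz g -> L f = L g -> f = g) /\
  (forall h, schwartz h -> exists2 g, schwartz g & L g = h).

Definition SO_set : set 'M[R]_D :=
  [set g | g^T *m g = 1%:M /\ \det g = 1].
Definition is_representation (tau : 'M[R]_D -> 'M[R]_N) : Prop :=
  [/\ tau 1%:M = 1%:M,
      (forall g h, SO_set g -> SO_set h -> tau (g *m h) = tau g *m tau h)
    & {within SO_set, continuous tau}].

(* (T_g f)(x) = tau(g) f(g^{-1} x), written with row vectors *)
Definition Tact (tau : 'M[R]_D -> 'M[R]_N) (g : 'M[R]_D) (f : fieldfun) : fieldfun :=
  fun x => f (x *m (invmx g)^T) *m (tau g)^T.

Definition diffop (B : 'I_D -> 'M[R]_N) (m : R) (f : fieldfun) : fieldfun :=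
  fun x => \sum_(j < D) ('D_(ebase j) f x) *m (B j)^T + m *: f x.

Definition Cov (tau : 'M[R]_D -> 'M[R]_N) (Dop : fieldfun -> fieldfun) : Prop :=
  (exists (B : 'I_D -> 'M[R]_N) (m : R), forall f, schwartz f -> Dop f = diffop B m f) /\
  (forall g f, SO_set g -> schwartz f -> Dop (Tact tau g f) = Tact tau g (Dop f)).

Definition strongly_regular (Dop : fieldfun -> fieldfun) : Prop :=
  [/\ maps_S Dop, continuous_on_S Dop & bijective_on_S Dop].

Definition commutator (Rf Dop : fieldfun -> fieldfun) (g : fieldfun) : fieldfun :=
  fsub (Rf (Dop g)) (Dop (Rf g)).

Definition reflection_map (Rf : fieldfun -> fieldfun) : Prop :=
  [/\ maps_S Rf, linear_on_S Rf, continuous_on_S Rf,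
      (forall f, schwartz f -> Rf (Rf f) = f) &
    (forall f, schwartz_plus f -> schwartz_minus (Rf f)) /\
    (forall f, schwartz_minus f -> schwartz_plus (Rf f))].

Section RF.
Context {dO : measure_display} {Omega : measurableType dO}.
Variable P : probability Omega R.

Definition gen_random_field (eta : fieldfun -> Omega -> R) : Prop :=
  [/\ (forall f, schwartz f -> measurable_fun setT (eta f)),
      (forall (a b : R) f g, schwartz f -> schwartz g ->
         {ae P, forall w, eta (fadd (fscale a f) (fscale b g)) w
                          = a * eta f w + b * eta g w})
    & (forall f (e : R), schwartz f -> 0 < e ->
         exists (l : seq (nat * seq 'I_D)) (delta : R), 0 < delta /\
           forall g, schwartz g ->
             (forall p, p \in l -> seminorm p.1 p.2 (fsub g f) < delta) ->
             (P [set w | (e < `|eta g w - eta f w|)%R] < e%:E)%E)].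

(* characteristic functional  Gamma(f) = E[exp(i eta(f))] *)
Definition charfun (eta : fieldfun -> Omega -> R) (f : fieldfun) : R[i] :=
  Complex (Rintegral P setT (fun w => cos (eta f w)))
          (Rintegral P setT (fun w => sin (eta f w))).
End RF.

Definition refl_form (Gamma : fieldfun -> R[i]) (Rf : fieldfun -> fieldfun)
    (n : nat) (c : 'I_n -> R[i]) (f : 'I_n -> fieldfun) : R[i] :=
  \sum_(k < n) \sum_(l < n) c k * (c l)^* * Gamma (fsub (f k) (Rf (f l))).

Definition reflection_positive {dO : measure_display} {Omega : measurableType dO}
    (P : probability Omega R) (eta : fieldfun -> Omega -> R)
    (Rf : fieldfun -> fieldfun) : Prop :=
  forall (n : nat) (c : 'I_n -> R[i]) (f : 'I_n -> fieldfun),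
    (forall k, schwartz_plus (f k)) -> 0 <= refl_form (charfun P eta) Rf c f.

Definition F_plus (Dop Rf : fieldfun -> fieldfun) (f : fieldfun) : Prop :=
  exists g, [/\ schwartz_plus g, commutator Rf Dop g = fzero & f = Dop g].

End Defs.

(* For f = D g in F_+, the vanishing commutator lets R pass through D, so
   f_k - R f_l = D (g_k - R g_l) by linearity of the differential operator D.
   Since Gamma_phi (D h) = Gamma_eta h, the form of phi on the f_k is the form
   of eta on the g_k, which is nonnegative because the g_k are supported in the
   positive half-space and eta is reflection positive. *)

From HB Require Import structures.
From mathcomp Require Import all_boot all_order all_algebra.
From mathcomp Require Import all_classical all_reals all_analysis.
From mathcomp Require Import complex.
Set Implicit Arguments. Unset Strict Implicit.
Import Order.TTheory GRing.Theory Num.Theory.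
Import numFieldNormedType.Exports.
Local Open Scope ring_scope.

Section SchwartzSub.
Variables (R : realType) (d N : nat).
Implicit Types (f g : fieldfun R d N).

Lemma dpart_sub (s : seq 'I_d.+1) f g : smooth f -> smooth g ->
  dpart s (fsub f g) = fsub (dpart s f) (dpart s g).
Proof.
move=> sf sg; elim: s => [//|j s IH] /=.
apply/funext => x; rewrite /= IH.
by rewrite [fsub _ _](_ : _ = dpart s f - dpart s g) // deriveB.
Qed.

Lemma schwartz_sub f g : schwartz f -> schwartz g -> schwartz (fsub f g).
Proof.
move=> [sf rf] [sg rg]; split.
  move=> s j x; rewrite dpart_sub //.
  by rewrite [fsub _ _](_ : _ = dpart s f - dpart s g) //; exact: derivableB.
move=> s k; have [C1 H1] := rf s k; have [C2 H2] := rg s k.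
exists (C1 + C2) => x; rewrite dpart_sub // /fsub.
apply: le_trans (lerD (H1 x) (H2 x)).
by rewrite -mulrDr ler_wpM2l ?exprn_ge0 ?addr_ge0 ?ler_normB.
Qed.

Lemma diffop_sub (B : 'I_d.+1 -> 'M[R]_N) (m : R) f g :
  smooth f -> smooth g ->
  diffop B m (fsub f g) = fsub (diffop B m f) (diffop B m g).
Proof.
move=> sf sg; apply/funext => x.
rewrite /diffop /fsub scalerBr opprD addrACA -sumrB; congr (_ + _).
apply: eq_bigr => j _; rewrite -mulmxBl; congr (_ *m _).
have -> : (fun y => f y - g y) = f - g by [].
by rewrite deriveB //; [exact: (sf [::]) | exact: (sg [::])].
Qed.

Lemma Cov_sub (tau : 'M[R]_d.+1 -> 'M[R]_N) (Dop : fieldfun R d N -> fieldfun R d N)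
  f g : Cov tau Dop -> schwartz f -> schwartz g ->
  Dop (fsub f g) = fsub (Dop f) (Dop g).
Proof.
move=> [[B [m DE]] _] Sf Sg.
rewrite !DE //; last exact: schwartz_sub.
exact: diffop_sub Sf.1 Sg.1.
Qed.

Lemma commutator_eq0 (Rf Dop : fieldfun R d N -> fieldfun R d N) g :
  commutator Rf Dop g = @fzero R d N -> Rf (Dop g) = Dop (Rf g).
Proof.
move=> RD0; apply/funext => x; apply/eqP; rewrite -subr_eq0.
by have /= := congr1 (@^~ x) RD0; rewrite /commutator /fsub => ->.
Qed.

End SchwartzSub.

Theorem proposition2p27 (R : realType) (d N : nat)
  (tau : 'M[R]_d.+1 -> 'M[R]_N)
  (Dop Rf : fieldfun R d N -> fieldfun R d N)
  (dO : measure_display) (Omega : measurableType dO) (P : probability Omega R)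
  (eta : fieldfun R d N -> Omega -> R)
  (dO' : measure_display) (Omega' : measurableType dO') (P' : probability Omega' R)
  (phi : fieldfun R d N -> Omega' -> R) :
  is_representation tau ->
  Cov tau Dop ->
  strongly_regular Dop ->
  reflection_map Rf ->
  gen_random_field P eta ->
  reflection_positive P eta Rf ->
  gen_random_field P' phi ->
  (* Gamma_phi(f) = Gamma_eta(D^{-1} f) *)
  (forall f g, schwartz g -> Dop g = f -> charfun P' phi f = charfun P eta g) ->
  forall (n : nat) (c : 'I_n -> R[i]) (f : 'I_n -> fieldfun R d N),
    (forall k, F_plus Dop Rf (f k)) ->
    0 <= refl_form (charfun P' phi) Rf c f.
Proof.
move=> _ DCov _ [RS _ _ _ _] _ etaRP _ charE n c f Fplus.
have [g gP] := choice Fplus.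
have gS k : schwartz (g k) by have [[]] := gP k.
suff -> : refl_form (charfun P' phi) Rf c f = refl_form (charfun P eta) Rf c g.
  by apply: etaRP => k; have [] := gP k.
apply: eq_bigr => k _; apply: eq_bigr => l _; congr (_ * _).
have [_ RD0 ->] := gP l; have [_ _ ->] := gP k.
apply: charE; first exact/schwartz_sub/RS.
rewrite (commutator_eq0 RD0); exact: Cov_sub DCov (gS k) (RS _ (gS l)).
Qed.
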